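(* Let $N\ge2$, $U=-e^{2\pi i/N}\begin{pmatrix}1/2&-\sqrt{3}/2\\ \sqrt3/2&1/2\end{pmatrix}$, and $|\psi_i\rangle=(U^i|0\rangle)^{\otimes N}$ for $i=0,1,2$, each with prior $1/3$. With $\alpha=\tfrac13\big(1-(-\tfrac12)^{N-1}\big)$, the optimal minimum-error success probability for this ensemble equals $\big(\sqrt{2/3}\sqrt{1-\alpha}+\sqrt{1/3}\sqrt{\alpha}\big)^2$, which tends to $1$ as $N\to\infty$.
   Context: The optimal minimum-error success probability of an ensemble $\{|\psi_i\rangle,p_i\}_{i=0}^2$ is the maximum over all three-outcome POVMs $\{\Pi_i\}$ on $(\mathbb{C}^2)^{\otimes N}$ of $\sum_ip_i\langle\psi_i|\Pi_i|\psi_i\rangle$. *)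

(* complex numbers are modelled by algC (algebraic complex
   numbers), which contain every quantity occurring in the statement. *)
From HB Require Import structures.
From mathcomp Require Import all_boot all_order all_algebra all_field.
Set Implicit Arguments. Unset Strict Implicit. Unset Printing Implicit Defensive.
Import Order.TTheory GRing.Theory Num.Theory.
Local Open Scope ring_scope.

Definition adjmx {m n} (A : 'M[algC]_(m, n)) : 'M[algC]_(n, m) :=
  map_mx (@Num.conj _) A^T.

(* N-fold tensor power of a qubit vector v in (C^2)^{(x)N} = C^(2^N):
   the amplitude of the computational basis state |b_{N-1} ... b_0>
   (k = sum_j b_j 2^j) is prod_j v_{b_j}. *)
Definition tpow (N : nat) (v : 'cV[algC]_2) : 'cV[algC]_(2 ^ N) :=
  \col_(k < 2 ^ N) \prod_(j < N) v (inord ((k %/ 2 ^ j) %% 2)) 0.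

(* e^{2 pi i / N}: N.-root (-1) is the N-th root of -1 of minimal
   nonnegative argument, i.e. e^{i pi / N}; its square is e^{2 pi i / N}. *)
Definition omegaN (N : nat) : algC := (N.-root (-1)) ^+ 2.

Definition Umx (N : nat) : 'M[algC]_2 :=
  (- omegaN N) *: \matrix_(i < 2, j < 2)
     (if i == j then 1 / 2
      else if (i : nat) == 0%N then - (sqrtC 3 / 2) else sqrtC 3 / 2).

Definition ket0 : 'cV[algC]_2 := delta_mx 0 0.

Definition psi (N : nat) (i : 'I_3) : 'cV[algC]_(2 ^ N) :=
  tpow N (Umx N ^+ i *m ket0).

Definition psd {n} (A : 'M[algC]_n) : Prop :=
  adjmx A = A /\ forall x : 'cV[algC]_n, 0 <= (adjmx x *m A *m x) 0 0.

Definition POVM3 {n} (P : 'I_3 -> 'M[algC]_n) : Prop :=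
  (forall i, psd (P i)) /\ \sum_(i < 3) P i = 1%:M.

Definition succ_prob (N : nat) (P : 'I_3 -> 'M[algC]_(2 ^ N)) : algC :=
  \sum_(i < 3) (1 / 3) * (adjmx (psi N i) *m P i *m psi N i) 0 0.

Definition alphaN (N : nat) : algC := (1 / 3) * (1 - (- (1 / 2)) ^+ N.-1).

Definition Popt_formula (N : nat) : algC :=
  (sqrtC (2 / 3) * sqrtC (1 - alphaN N) + sqrtC (1 / 3) * sqrtC (alphaN N)) ^+ 2.

(* Let psi_0, psi_1, psi_2 have the Gram matrix G
      with diagonal (p^2 + 2 q^2)/3 and off-diagonal entries (p^2 - q^2)/3,
      where p, q > 0 are the square roots of the eigenvalues of G.  Put
      s = (p + 2 q)/3, the diagonal entry of G^{1/2}.  Every three-outcome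
      POVM succeeds with probability at most s^2: the operator
      Y = s * sum_jk (G^{-1/2})_jk |psi_j><psi_k| dominates each
      |psi_i><psi_i| (the difference is an explicit sum of two positive
      rank-one operators) and pairs with the identity to 3 s^2.  The
      square-root measurement, built from the orthonormal vectors
      m_i = sum_j (G^{-1/2})_ji psi_j, attains s^2.
   2. The ensemble of the theorem is symmetric.  U^i|0> = w^i t_i, where
      w = e^{2 pi i/N} and t_0, t_1, t_2 are the real trine vectors with
      mutual overlaps -1/2.  Inner products of N-th tensor powers are N-th
      powers of inner products, and w^N = 1 removes the phases, so the
      Gram matrix has diagonal 1 and off-diagonal c = (-1/2)^N; hence
      p^2 = 1 + 2c and q^2 = 1 - c.
   3. s^2 is the closed formula of the statement, and |s^2 - 1| <= 2|c|,
      which gives the limit. *)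
From HB Require Import structures.
From mathcomp Require Import all_boot all_order all_algebra all_field.
From mathcomp Require Import ring.
Import Order.TTheory GRing.Theory Num.Theory.
Local Open Scope ring_scope.

Lemma adjmxE {m n} (A : 'M[algC]_(m, n)) i j : adjmx A i j = (A j i)^*.
Proof. by rewrite /adjmx !mxE. Qed.

Lemma adjmxK {m n} (A : 'M[algC]_(m, n)) : adjmx (adjmx A) = A.
Proof. by apply/matrixP=> i j; rewrite !adjmxE conjCK. Qed.

Lemma adjmxD {m n} (A B : 'M[algC]_(m, n)) : adjmx (A + B) = adjmx A + adjmx B.
Proof. by rewrite /adjmx linearD map_mxD. Qed.

Lemma adjmxN {m n} (A : 'M[algC]_(m, n)) : adjmx (- A) = - adjmx A.
Proof. by rewrite /adjmx linearN map_mxN. Qed.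

Lemma adjmxZ {m n} a (A : 'M[algC]_(m, n)) : adjmx (a *: A) = a^* *: adjmx A.
Proof. by rewrite /adjmx linearZ map_mxZ. Qed.

Lemma adjmx_sum {m n} (I : finType) (F : I -> 'M[algC]_(m, n)) :
  adjmx (\sum_i F i) = \sum_i adjmx (F i).
Proof. by rewrite /adjmx linear_sum raddf_sum. Qed.

Lemma adjmxM {m n p} (A : 'M[algC]_(m, n)) (B : 'M[algC]_(n, p)) :
  adjmx (A *m B) = adjmx B *m adjmx A.
Proof. by rewrite /adjmx trmx_mul map_mxM. Qed.

Lemma adjmx1 {n} : adjmx (1%:M : 'M[algC]_n) = 1%:M.
Proof. by rewrite /adjmx trmx1 map_mx1. Qed.

Definition inner {n} (u v : 'cV[algC]_n) : algC := (adjmx u *m v) 0 0.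
Definition braket {n} (x : 'cV[algC]_n) (A : 'M[algC]_n) (y : 'cV[algC]_n) :
  algC := (adjmx x *m A *m y) 0 0.

Lemma innerE {n} (u v : 'cV[algC]_n) : inner u v = \sum_i (u i 0)^* * v i 0.
Proof. by rewrite /inner mxE; apply: eq_bigr => i _; rewrite adjmxE. Qed.

Lemma inner_ge0 {n} (u : 'cV[algC]_n) : 0 <= inner u u.
Proof.
by rewrite innerE; apply: sumr_ge0 => i _; rewrite mulrC -normCK exprn_ge0.
Qed.

Lemma innerC {n} (u v : 'cV[algC]_n) : inner v u = (inner u v)^*.
Proof.
rewrite !innerE rmorph_sum; apply: eq_bigr => i _.
by rewrite rmorphM /= conjCK mulrC.
Qed.

Lemma innerZ {n} a b (u v : 'cV[algC]_n) :
  inner (a *: u) (b *: v) = a^* * b * inner u v.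
Proof.
by rewrite /inner adjmxZ -scalemxAl -scalemxAr !mxE mulrA.
Qed.

Lemma inner_suml {n} (I : finType) (v : I -> 'cV[algC]_n) (a : I -> algC) y :
  inner (\sum_j a j *: v j) y = \sum_j (a j)^* * inner (v j) y.
Proof.
rewrite /inner adjmx_sum mulmx_suml summxE; apply: eq_bigr => j _.
by rewrite adjmxZ -scalemxAl mxE.
Qed.

Lemma braket1 {n} (x y : 'cV[algC]_n) : braket x 1%:M y = inner x y.
Proof. by rewrite /braket mulmx1. Qed.

Lemma braketD {n} (x y : 'cV[algC]_n) A B :
  braket x (A + B) y = braket x A y + braket x B y.
Proof. by rewrite /braket mulmxDr mulmxDl mxE. Qed.

Lemma braketN {n} (x y : 'cV[algC]_n) A : braket x (- A) y = - braket x A y.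
Proof. by rewrite /braket mulmxN mulNmx mxE. Qed.

Lemma braket_sum {n} (I : finType) (x y : 'cV[algC]_n) (A : I -> 'M_n) :
  braket x (\sum_i A i) y = \sum_i braket x (A i) y.
Proof. by rewrite /braket mulmx_sumr mulmx_suml summxE. Qed.

Lemma braket_outer {n} (x u w y : 'cV[algC]_n) :
  braket x (u *m adjmx w) y = inner x u * inner w y.
Proof. by rewrite /braket /inner -!mulmxA mulmxA [in LHS]mxE big_ord1. Qed.

Lemma braket_lin {n} (I : finType) (v : I -> 'cV[algC]_n) (a b : I -> algC) A :
  braket (\sum_j a j *: v j) A (\sum_k b k *: v k) =
  \sum_j \sum_k ((a j)^* * b k * braket (v j) A (v k)).
Proof.
rewrite /braket adjmx_sum -mulmxA mulmx_suml summxE; apply: eq_bigr => j _.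
rewrite mulmxA adjmxZ -!scalemxAl mulmx_sumr mxE summxE big_distrr.
by apply: eq_bigr => k _; rewrite -scalemxAr /= [in LHS]mxE mulrA.
Qed.

Lemma braket_lin_real {n} (I : finType) (v : I -> 'cV[algC]_n) (a : I -> algC) A :
  (forall j, (a j)^* = a j) ->
  braket (\sum_j a j *: v j) A (\sum_k a k *: v k) =
  \sum_j \sum_k (a j * a k * braket (v j) A (v k)).
Proof.
move=> a_real; rewrite braket_lin.
by apply: eq_bigr => j _; apply: eq_bigr => k _; rewrite a_real.
Qed.

Definition outer {n} (u : 'cV[algC]_n) : 'M[algC]_n := u *m adjmx u.

Lemma psd_outer {n} (u : 'cV[algC]_n) : psd (outer u).
Proof.
split; first by rewrite /outer adjmxM adjmxK.
move=> x; rewrite -/(braket x _ x) braket_outer (innerC u x) mulrC -normCK.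
exact: exprn_ge0.
Qed.

Notation o0 := (@Ordinal 3 0 isT).
Notation o1 := (@Ordinal 3 1 isT).
Notation o2 := (@Ordinal 3 2 isT).

Lemma sum3 (R : nmodType) (F : 'I_3 -> R) : \sum_i F i = F o0 + F o1 + F o2.
Proof.
rewrite !big_ord_recr big_ord0 /= add0r.
by congr (_ + _ + _); congr (F _); apply/val_inj.
Qed.

Lemma ord3P (i : 'I_3) : [\/ i = o0, i = o1 | i = o2].
Proof.
case: i => [[|[|[|m]]] hi] //.
- by apply: Or31; apply/val_inj.
- by apply: Or32; apply/val_inj.
- by apply: Or33; apply/val_inj.
Qed.

(* Bessel's inequality for an orthonormal pair: this is what makes
   1 - |m1><m1| - |m2><m2| positive. *)
Lemma bessel2 {n} (x m1 m2 : 'cV[algC]_n) :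
  inner m1 m1 = 1 -> inner m2 m2 = 1 -> inner m1 m2 = 0 -> inner m2 m1 = 0 ->
  0 <= inner x x - inner x m1 * inner m1 x - inner x m2 * inner m2 x.
Proof.
move=> h11 h22 h12 h21.
pose v (j : 'I_3) := if j == o0 then x else if j == o1 then m1 else m2.
pose a (j : 'I_3) :=
  if j == o0 then 1 else if j == o1 then - inner m1 x else - inner m2 x.
have := inner_ge0 (\sum_j a j *: v j).
rewrite -braket1 braket_lin !sum3 /a /v /= !braket1.
rewrite h11 h22 h12 h21 (innerC m1 x) (innerC m2 x) /= ?rmorphN ?rmorph1 /=.
move=> norm_ge0; apply: (le_trans norm_ge0).
by rewrite le_eqVlt; apply/orP; left; apply/eqP; ring.
Qed.

(* Data of a symmetric Gram matrix G with eigenvalues p^2 (once) and q^2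
   (twice): its entries, the diagonal entry of G^{1/2}, and G^{-1/2}. *)
Definition gram_diag (p q : algC) := (p ^+ 2 + 2 * q ^+ 2) / 3.
Definition gram_off (p q : algC) := (p ^+ 2 - q ^+ 2) / 3.
Definition sqrt_gram_diag (p q : algC) := (p + 2 * q) / 3.
Definition inv_sqrt_gram (p q : algC) (j k : 'I_3) : algC :=
  if j == k then (q + 2 * p) / (3 * p * q) else (q - p) / (3 * p * q).

Section SymmetricEnsemble.
Variables (n : nat) (psis : 'I_3 -> 'cV[algC]_n) (p q : algC).
Hypotheses (p_gt0 : 0 < p) (q_gt0 : 0 < q).

Let p_real : p^* = p. Proof. exact/geC0_conj/ltW. Qed.
Let q_real : q^* = q. Proof. exact/geC0_conj/ltW. Qed.
Let p_neq0 : p != 0. Proof. by rewrite gt_eqF. Qed.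
Let q_neq0 : q != 0. Proof. by rewrite gt_eqF. Qed.

Let inv_sqrt_gram_real j k : (inv_sqrt_gram p q j k)^* = inv_sqrt_gram p q j k.
Proof.
by rewrite /inv_sqrt_gram; case: ifP => _;
  rewrite !(rmorphM, rmorphB, rmorphD, rmorph_nat, fmorphV) /=
          ?rmorph1 p_real q_real.
Qed.

(* Coefficients of the two vectors witnessing Y - |psi_i><psi_i| >= 0: the
   difference of the two other states, and a weighted sum of all three. *)
Definition other (i : 'I_3) : 'I_3 := if i == o0 then o1 else o0.
Definition diff_coef (i j : 'I_3) : algC :=
  if j == i then 0 else if j == other i then 1 else -1.
Definition sum_coef (i j : 'I_3) : algC :=
  if j == i then 2 * (q - p) / (p + 2 * q) else 1.

Let diff_coef_real i j : (diff_coef i j)^* = diff_coef i j.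
Proof.
by rewrite /diff_coef; do 2?case: ifP => _; rewrite ?(rmorph0, rmorphN, rmorph1).
Qed.

Let sum_coef_real i j : (sum_coef i j)^* = sum_coef i j.
Proof.
rewrite /sum_coef; case: ifP => _; rewrite ?rmorph1 //.
by rewrite !(rmorphM, rmorphB, rmorphD, rmorph_nat, fmorphV) /=
           ?rmorph1 p_real q_real.
Qed.

(* Y - |psi_i><psi_i| >= 0, tested against an arbitrary positive P; this
   holds for any three vectors, whatever their Gram matrix. *)
Lemma dual_dominates (P : 'M[algC]_n) i : psd P ->
  braket (psis i) P (psis i) <=
  sqrt_gram_diag p q *
    \sum_j \sum_k inv_sqrt_gram p q j k * braket (psis j) P (psis k).
Proof.
move=> P_psd.
have pq_neq0 : p + 2 * q != 0 by rewrite gt_eqF // addr_gt0 // mulr_gt0.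
pose u := \sum_j diff_coef i j *: psis j.
pose w := \sum_j sum_coef i j *: psis j.
have decomp : sqrt_gram_diag p q *
    \sum_j \sum_k inv_sqrt_gram p q j k * braket (psis j) P (psis k)
    - braket (psis i) P (psis i)
  = (p + 2 * q) / (6 * q) * braket u P u
    + (p + 2 * q) ^+ 2 / (18 * p * q) * braket w P w.
  rewrite !braket_lin_real; [|exact: sum_coef_real|exact: diff_coef_real].
  rewrite !sum3 /inv_sqrt_gram /diff_coef /sum_coef /sqrt_gram_diag /other.
  by case: (ord3P i) => -> /=; field; rewrite ?p_neq0 ?q_neq0 ?pq_neq0 ?pnatr_eq0.
rewrite -subr_ge0 decomp addr_ge0 // mulr_ge0 ?P_psd.2 //.
- by rewrite divr_ge0 // ?addr_ge0 ?mulr_ge0 // ltW.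
- by rewrite divr_ge0 // ?exprn_ge0 ?addr_ge0 ?mulr_ge0 // ltW.
Qed.

Hypothesis gram_psis : forall j k,
  inner (psis j) (psis k) = if j == k then gram_diag p q else gram_off p q.

Lemma success_le (P : 'I_3 -> 'M[algC]_n) : POVM3 P ->
  \sum_i 1 / 3 * braket (psis i) (P i) (psis i) <= sqrt_gram_diag p q ^+ 2.
Proof.
move=> [P_psd P_sum].
have pair_identity : \sum_i 1 / 3 * (sqrt_gram_diag p q *
    \sum_j \sum_k inv_sqrt_gram p q j k * braket (psis j) (P i) (psis k))
  = sqrt_gram_diag p q ^+ 2.
  rewrite -mulr_sumr -mulr_sumr exchange_big.
  under eq_bigr do rewrite exchange_big.
  under eq_bigr do under eq_bigr do rewrite -mulr_sumr -braket_sum P_sum.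
  under eq_bigr do under eq_bigr do rewrite braket1 gram_psis.
  rewrite !sum3 /inv_sqrt_gram /gram_diag /gram_off /sqrt_gram_diag /=.
  by field; rewrite ?p_neq0 ?q_neq0 ?pnatr_eq0.
rewrite -pair_identity; apply: ler_sum => i _; apply: ler_wpM2l.
  by rewrite divr_ge0 ?ler0n.
exact: dual_dominates.
Qed.

Definition srm_vec (i : 'I_3) : 'cV[algC]_n :=
  \sum_j inv_sqrt_gram p q j i *: psis j.
Definition srm (i : 'I_3) : 'M[algC]_n :=
  if i == o0 then 1%:M - outer (srm_vec o1) - outer (srm_vec o2)
  else outer (srm_vec i).

Lemma srm_vec_orthonormal a b :
  inner (srm_vec a) (srm_vec b) = if a == b then 1 else 0.
Proof.
rewrite -braket1 /srm_vec braket_lin.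
under eq_bigr do under eq_bigr do rewrite braket1 gram_psis inv_sqrt_gram_real.
rewrite !sum3 /inv_sqrt_gram /gram_diag /gram_off.
by case: (ord3P a) => ->; case: (ord3P b) => -> /=; field;
  rewrite ?p_neq0 ?q_neq0 ?pnatr_eq0.
Qed.

Lemma srm_vec_overlap a i :
  inner (srm_vec a) (psis i) = if a == i then sqrt_gram_diag p q else (p - q) / 3.
Proof.
rewrite /srm_vec inner_suml.
under eq_bigr do rewrite gram_psis inv_sqrt_gram_real.
rewrite !sum3 /inv_sqrt_gram /gram_diag /gram_off /sqrt_gram_diag.
by case: (ord3P a) => ->; case: (ord3P i) => -> /=; field;
  rewrite ?p_neq0 ?q_neq0 ?pnatr_eq0.
Qed.

Lemma srm_POVM : POVM3 srm.
Proof.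
split; last by rewrite sum3 /srm /= (addrAC _ (- _)) !subrK.
move=> i; rewrite /srm; case: ifP => _; last exact: psd_outer.
split; first by rewrite !adjmxD !adjmxN adjmx1 /outer !adjmxM !adjmxK.
move=> x; rewrite -/(braket x _ x) !braketD !braketN braket1 /outer.
by rewrite !braket_outer; apply: bessel2; rewrite srm_vec_orthonormal.
Qed.

Lemma srm_success :
  \sum_i 1 / 3 * braket (psis i) (srm i) (psis i) = sqrt_gram_diag p q ^+ 2.
Proof.
rewrite sum3 /srm /= !braketD !braketN braket1 /outer !braket_outer.
rewrite !(innerC (srm_vec _) (psis _)) !srm_vec_overlap !gram_psis /=.
rewrite !(rmorphM, rmorphB, rmorphD, rmorph_nat, fmorphV) /= p_real q_real.
by rewrite /gram_diag /sqrt_gram_diag; field; rewrite ?pnatr_eq0.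
Qed.

End SymmetricEnsemble.

Arguments srm {n}.

Lemma bit_shift (i N j : nat) : (j < N)%N ->
  ((i + 2 ^ N) %/ 2 ^ j %% 2 = i %/ 2 ^ j %% 2)%N.
Proof.
move=> lt_jN.
have -> : (2 ^ N = 2 ^ (N - j).-1 * 2 * 2 ^ j)%N.
  by rewrite -expnSr prednK ?subn_gt0 // -expnD subnK // ltnW.
by rewrite addnC divnMDl ?expn_gt0 // modnMDl.
Qed.

Lemma bit_top (i N : nat) : (i < 2 ^ N)%N -> ((i + 2 ^ N) %/ 2 ^ N %% 2 = 1)%N.
Proof.
move=> lt_i; rewrite -{1}(mul1n (2 ^ N)%N) addnC divnMDl ?expn_gt0 //.
by rewrite divn_small.
Qed.

Lemma sum_digits {R : comPzSemiRingType} (h : nat -> R) N :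
  \sum_(k < 2 ^ N) \prod_(j < N) h ((k %/ 2 ^ j) %% 2)%N = (h 0%N + h 1%N) ^+ N.
Proof.
elim: N => [|N IH]; first by rewrite expn0 big_ord1 big_ord0 expr0.
rewrite -(big_mkord xpredT (fun k => \prod_(j < N.+1) h ((k %/ 2 ^ j) %% 2)%N)).
rewrite expnS mul2n -addnn (big_cat_nat (n := (2 ^ N)%N)) ?leq_addr //.
have -> (F : nat -> R) : \sum_(2 ^ N <= k < 2 ^ N + 2 ^ N) F k =
                          \sum_(0 <= k < 2 ^ N) F (k + 2 ^ N)%N.
  by rewrite -{1}[(2 ^ N)%N]add0n big_addn addnK.
rewrite exprS mulrC mulrDr -IH !big_mkord.
rewrite !mulr_suml; congr (_ + _); apply: eq_bigr => k _; rewrite big_ord_recr /=.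
- by rewrite divn_small // mulrC.
- by rewrite bit_top //; congr (_ * _); apply: eq_bigr => j _; rewrite bit_shift.
Qed.

Notation t0 := (@Ordinal 2 0 isT).
Notation t1 := (@Ordinal 2 1 isT).

Lemma sum2 (R : nmodType) (F : 'I_2 -> R) : \sum_i F i = F t0 + F t1.
Proof.
rewrite !big_ord_recr big_ord0 /= add0r.
by congr (_ + _); congr (_ _); apply/val_inj.
Qed.

Lemma ord2P (k : 'I_2) : k = t0 \/ k = t1.
Proof. by case: k => [[|[|]]] // ?; [left | right]; apply/val_inj. Qed.

Lemma inner2 (v w : 'cV[algC]_2) :
  inner v w = (v t0 0)^* * w t0 0 + (v t1 0)^* * w t1 0.
Proof. by rewrite innerE sum2. Qed.

Lemma inner_tpow N (v w : 'cV[algC]_2) :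
  inner (tpow N v) (tpow N w) = inner v w ^+ N.
Proof.
rewrite innerE.
under eq_bigr => k _ do rewrite !mxE rmorph_prod -big_split /=.
rewrite (sum_digits (fun b => (v (inord b) 0)^* * w (inord b) 0)) inner2.
have -> : (inord 0 : 'I_2) = t0 by apply/val_inj; rewrite /= inordK.
by have -> : (inord 1 : 'I_2) = t1 by apply/val_inj; rewrite /= inordK.
Qed.

Lemma half_ge0 : 0 <= (1 / 2 : algC).
Proof. by rewrite divr_ge0 ?ler01 ?ler0n. Qed.

(* The trine vectors t_i = (cos(2 pi i/3), -sin(2 pi i/3)). *)
Definition half_sqrt3 : algC := sqrtC 3 / 2.
Definition trine (i : 'I_3) : 'cV[algC]_2 :=
  \col_(k < 2) if k == t0 then (if i == o0 then 1 else - (1 / 2))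
               else if i == o0 then 0 else if i == o1 then - half_sqrt3
               else half_sqrt3.

Lemma half_sqrt3_sq : half_sqrt3 * half_sqrt3 = 3 / 4.
Proof. by rewrite -expr2 expr_div_n sqrtCK; field. Qed.

Lemma trine_real i k : (trine i k 0)^* = trine i k 0.
Proof.
have half_nneg := half_ge0.
have half_sqrt3_ge0 : 0 <= half_sqrt3 by rewrite divr_ge0 ?sqrtC_ge0 ?ler0n.
by rewrite mxE; do 3?case: ifP => _; rewrite ?rmorphN /= geC0_conj.
Qed.

Lemma trine_gram i j : inner (trine i) (trine j) = if i == j then 1 else - (1 / 2).
Proof.
rewrite inner2 !trine_real !mxE /=.
by case: (ord3P i) => ->; case: (ord3P j) => -> /=;
  rewrite ?(mulrN, mulNr, opprK) ?half_sqrt3_sq; field.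
Qed.

(* U = -w R, with R the rotation by pi/3; it rotates the trine
   cyclically up to the phase w = omegaN N, so U^i|0> = w^i t_i. *)
Lemma UmxE N k l : Umx N k l = - omegaN N *
  (if k == l then 1 / 2 else if k == t0 then - half_sqrt3 else half_sqrt3).
Proof. by rewrite !mxE; case: (ord2P k) => ->; case: (ord2P l) => ->. Qed.

Lemma Umx_trine N :
  Umx N *m trine o0 = omegaN N *: trine o1 /\
  Umx N *m trine o1 = omegaN N *: trine o2.
Proof.
split; apply/matrixP=> k l; rewrite mxE sum2 !UmxE !mxE /=;
  (* only the relation h^2 = 3/4 for h = sqrt 3 / 2 is needed *)
  case: (ord2P k) => -> /=; move: half_sqrt3_sq;
  generalize half_sqrt3 (omegaN N) => h w hh;
  by rewrite ?(mulrN, mulNr, opprK) -?mulrA ?hh; field.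
Qed.

Lemma ket0_trine : ket0 = trine o0.
Proof. by apply/matrixP=> k l; rewrite !mxE ord1; case: (ord2P k) => ->. Qed.

Lemma Upow_ket0 N (i : 'I_3) : Umx N ^+ i *m ket0 = omegaN N ^+ i *: trine i.
Proof.
have [U_t0 U_t1] := Umx_trine N.
case: (ord3P i) => ->; rewrite ket0_trine.
- by rewrite expr0 mul1mx scale1r.
- by rewrite !expr1.
- by rewrite expr2 -mulmxA U_t0 -scalemxAr U_t1 scalerA.
Qed.

Lemma omegaN_pow N : (0 < N)%N -> omegaN N ^+ N = 1.
Proof. by move=> N_gt0; rewrite /omegaN exprAC rootCK // sqrrN expr1n. Qed.

Lemma phase_pow (w g : algC) (i j N : nat) : w ^+ N = 1 ->
  ((w ^+ i)^* * w ^+ j * g) ^+ N = g ^+ N.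
Proof.
move=> wN; have wkN k : (w ^+ k) ^+ N = 1 by rewrite -exprM mulnC exprM wN expr1n.
by rewrite !exprMn -rmorphXn !wkN rmorph1 !mul1r.
Qed.

Definition overlap (N : nat) : algC := (- (1 / 2)) ^+ N.

Lemma psi_gram N i j : (0 < N)%N ->
  inner (psi N i) (psi N j) = if i == j then 1 else overlap N.
Proof.
move=> N_gt0; rewrite /psi !Upow_ket0 inner_tpow innerZ trine_gram.
by rewrite phase_pow ?omegaN_pow //; case: ifP => _; rewrite ?expr1n.
Qed.

Lemma overlap_real N : overlap N \is Num.real.
Proof. by rewrite rpredX // rpredN ger0_real // half_ge0. Qed.

Lemma overlap_norm N : `|overlap N| = (1 / 2) ^+ N.
Proof. by rewrite normrX normrN ger0_norm // half_ge0. Qed.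

Lemma overlap_small {N} : (2 <= N)%N -> `|overlap N| <= 1 / 4.
Proof.
move=> N_ge2; rewrite overlap_norm.
have -> : (1 / 4 : algC) = (1 / 2) ^+ 2 by field.
apply: ler_wiXn2l => //; first exact: half_ge0.
by rewrite ler_pdivrMr ?ltr0n // mul1r ler1n.
Qed.

Lemma small_overlap_eigen {c : algC} : c \is Num.real -> `|c| <= 1 / 4 ->
  0 < 1 + 2 * c /\ 0 < 1 - c.
Proof.
move=> c_real c_small.
have c_le : c <= 1 / 4 by apply: le_trans c_small; rewrite real_ler_norm.
have Nc_le : - c <= 1 / 4.
  by apply: le_trans c_small; rewrite -normrN real_ler_norm ?rpredN.
split.
  rewrite -[2 * c]opprK -mulrN subr_gt0; apply: le_lt_trans (_ : 2 * (1 / 4) < 1).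
    by rewrite ler_pM2l ?ltr0n.
  by rewrite mulrCA mul1r ltr_pdivrMr ?ltr0n // mul1r ltr_nat.
rewrite subr_gt0; apply: le_lt_trans c_le _.
by rewrite ltr_pdivrMr ?ltr0n // mul1r ltr1n.
Qed.

Lemma gram_diag_overlap (c : algC) :
  gram_diag (sqrtC (1 + 2 * c)) (sqrtC (1 - c)) = 1.
Proof. by rewrite /gram_diag !sqrtCK; field. Qed.

Lemma gram_off_overlap (c : algC) :
  gram_off (sqrtC (1 + 2 * c)) (sqrtC (1 - c)) = c.
Proof. by rewrite /gram_off !sqrtCK; field. Qed.

Lemma trine_optimal N : (2 <= N)%N ->
  let s := sqrt_gram_diag (sqrtC (1 + 2 * overlap N)) (sqrtC (1 - overlap N)) in
  (exists P : 'I_3 -> 'M[algC]_(2 ^ N), POVM3 P /\ succ_prob P = s ^+ 2) /\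
  (forall P : 'I_3 -> 'M[algC]_(2 ^ N), POVM3 P -> succ_prob P <= s ^+ 2).
Proof.
move=> N_ge2 s.
have [p_gt0 q_gt0] := small_overlap_eigen (overlap_real N) (overlap_small N_ge2).
rewrite -sqrtC_gt0 in p_gt0; rewrite -sqrtC_gt0 in q_gt0.
have gram_psi j k : inner (psi N j) (psi N k) = if j == k
    then gram_diag (sqrtC (1 + 2 * overlap N)) (sqrtC (1 - overlap N))
    else gram_off (sqrtC (1 + 2 * overlap N)) (sqrtC (1 - overlap N)).
  by rewrite psi_gram ?gram_diag_overlap ?gram_off_overlap // (leq_trans _ N_ge2).
split; last by move=> P; apply: success_le.
exists (srm (psi N) (sqrtC (1 + 2 * overlap N)) (sqrtC (1 - overlap N))).
by split; [apply: srm_POVM | apply: srm_success].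
Qed.

Lemma Popt_formulaE N : (2 <= N)%N ->
  Popt_formula N =
  sqrt_gram_diag (sqrtC (1 + 2 * overlap N)) (sqrtC (1 - overlap N)) ^+ 2.
Proof.
move=> N_ge2.
have [p2_gt0 q2_gt0] := small_overlap_eigen (overlap_real N) (overlap_small N_ge2).
have alphaE : alphaN N = 1 / 3 * (1 + 2 * overlap N).
  by case: N N_ge2 {p2_gt0 q2_gt0} => // M _; rewrite /alphaN /overlap exprS /=; field.
have alphaCE : 1 - alphaN N = 2 / 3 * (1 - overlap N) by rewrite alphaE; field.
rewrite /Popt_formula alphaCE alphaE.
rewrite [sqrtC (2 / 3 * _)]sqrtCM ?nnegrE ?ltW ?divr_gt0 //.
rewrite [sqrtC (1 / 3 * _)]sqrtCM ?nnegrE ?ltW ?divr_gt0 //.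
rewrite !mulrA -!expr2 !sqrtCK /sqrt_gram_diag.
by congr (_ ^+ 2); field.
Qed.

Lemma sqrt_gram_diag_near1 {c : algC} : c \is Num.real -> `|c| <= 1 / 4 ->
  `|sqrt_gram_diag (sqrtC (1 + 2 * c)) (sqrtC (1 - c)) ^+ 2 - 1| <= 2 * `|c|.
Proof.
move=> c_real c_small; have [p2_gt0 q2_gt0] := small_overlap_eigen c_real c_small.
set p := sqrtC (1 + 2 * c); set q := sqrtC (1 - c).
set x := (1 + 2 * c) * (1 - c).
have pq : p * q = sqrtC x by rewrite sqrtCM // nnegrE ltW.
have x_ge0 : 0 <= x by rewrite mulr_ge0 // ltW.
have s2E : sqrt_gram_diag p q ^+ 2 - 1 = (4 * (p * q - 1) - 2 * c) / 9.
  transitivity ((p ^+ 2 + 4 * (p * q) + 4 * q ^+ 2) / 9 - 1).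
    by rewrite /sqrt_gram_diag; field.
  by rewrite !sqrtCK; field.
have sqrt_dist : `|sqrtC x - 1| <= `|x - 1|.
  have -> : x - 1 = (sqrtC x - 1) * (sqrtC x + 1) by rewrite -{1}(sqrtCK x); ring.
  rewrite normrM ler_peMr ?normr_ge0 // ger0_norm ?addr_ge0 ?sqrtC_ge0 //.
  by rewrite lerDr sqrtC_ge0.
have x_dist : `|x - 1| <= 3 / 2 * `|c|.
  have -> : x - 1 = c * (1 - 2 * c) by rewrite /x; ring.
  rewrite normrM mulrC ler_wpM2r ?normr_ge0 //.
  apply: le_trans (ler_normB _ _) _; rewrite normr1 normrM normr_nat.
  have -> : (3 / 2 : algC) = 1 + 2 * (1 / 4) by field.
  by rewrite lerD2l ler_pM2l ?ltr0n.
rewrite s2E normrM normfV normr_nat ler_pdivrMr ?ltr0n //.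
apply: le_trans (ler_normB _ _) _; rewrite !normrM !normr_nat pq.
apply: le_trans (_ : 4 * (3 / 2 * `|c|) + 2 * `|c| <= _).
  by rewrite lerD2r ler_pM2l ?ltr0n // (le_trans sqrt_dist x_dist).
have -> : 4 * (3 / 2 * `|c|) + 2 * `|c| = 8 * `|c| by field.
by rewrite mulrAC ler_wpM2r ?normr_ge0 // -natrM ler_nat.
Qed.

Lemma Popt_formula_limit (eps : algC) : 0 < eps ->
  exists N0 : nat, forall N : nat, (N0 <= N)%N -> `|Popt_formula N - 1| < eps.
Proof.
move=> eps_gt0; pose K := Num.Def.archi_bound (2 / eps).
have K_gt : 2 / eps < K%:R by apply: archi_boundP; rewrite divr_ge0 ?ler0n // ltW.
exists K.+2 => N K_le; have N_ge2 : (2 <= N)%N by apply: leq_trans K_le.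
rewrite Popt_formulaE //.
apply: le_lt_trans (sqrt_gram_diag_near1 (overlap_real N) (overlap_small N_ge2)) _.
rewrite overlap_norm expr_div_n expr1n mulrA mulr1 ltr_pdivrMr ?exprn_gt0 ?ltr0n //.
rewrite -ltr_pdivrMl // mulrC; apply: lt_trans K_gt _.
apply: lt_trans (_ : N%:R < 2 ^+ N); last by rewrite -natrX ltr_nat ltn_expl.
by rewrite ltr_nat (leq_trans _ K_le).
Qed.

Theorem mainTheorem12 :
  (forall N : nat, (2 <= N)%N ->
     (exists P : 'I_3 -> 'M[algC]_(2 ^ N),
        POVM3 P /\ succ_prob P = Popt_formula N) /\
     (forall P : 'I_3 -> 'M[algC]_(2 ^ N),
        POVM3 P -> succ_prob P <= Popt_formula N)) /\
  (forall eps : algC, 0 < eps ->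
     exists N0 : nat, forall N : nat, (N0 <= N)%N ->
       `|Popt_formula N - 1| < eps).
Proof.
split; last exact: Popt_formula_limit.
by move=> N N_ge2; rewrite Popt_formulaE //; exact: trine_optimal.
Qed.
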